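(* For every set of names $\rho$ and processes $P,Q$: if $\rho\vdash P$ and $P\equiv Q$ then $\rho\vdash Q$.
   Context: Let $\mathcal N$ be a countable set of names. Processes are generated by $P,Q ::= 0 \mid P\mid Q \mid (\nu a)P \mid (a)P \mid \alpha.P$, where $(\nu a)P$ is name restriction (binding $a$), $(a)P$ is the authorization scope ($a$ not bound), and prefixes are $\alpha ::= \overline{a}\langle b\rangle$ (output) $\mid a(x)$ (input, binding $x$) $\mid \overline{a}\langle\!\langle b\rangle\!\rangle$ (send authorization for $b$ on $a$) $\mid a\langle\!\langle b\rangle\!\rangle$ (receive authorization for $b$ on $a$; $b$ not bound). Free names: $\mathrm{fn}(0)=\emptyset$, $\mathrm{fn}(P\mid Q)=\mathrm{fn}(P)\cup\mathrm{fn}(Q)$, $\mathrm{fn}((\nu a)P)=\mathrm{fn}(P)\setminus\{a\}$, $\mathrm{fn}((a)P)=\{a\}\cup\mathrm{fn}(P)$, $\mathrm{fn}(\overline{a}\langle b\rangle.P)=\mathrm{fn}(\overline{a}\langle\!\langle b\rangle\!\rangle.P)=\mathrm{fn}(a\langle\!\langle b\rangle\!\rangle.P)=\{a,b\}\cup\mathrm{fn}(P)$, $\mathrm{fn}(a(x).P)=\{a\}\cup(\mathrm{fn}(P)\setminus\{x\})$. Structural congruence $\equiv$ is the least congruence on processes satisfying: $P\mid 0\equiv P$; $P\mid Q\equiv Q\mid P$; $(P\mid Q)\mid R\equiv P\mid(Q\mid R)$; $(\nu a)0\equiv 0$; $(\nu a)(\nu b)P\equiv(\nu b)(\nu a)P$;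 $P\mid(\nu a)Q\equiv(\nu a)(P\mid Q)$ if $a\notin\mathrm{fn}(P)$; $P\equiv Q$ whenever $P,Q$ are $\alpha$-convertible; $(a)(b)P\equiv(b)(a)P$; $(a)0\equiv 0$; $(a)(P\mid Q)\equiv(a)P\mid(a)Q$; $(a)(\nu b)P\equiv(\nu b)(a)P$ if $a\neq b$. The typing judgment $\rho\vdash P$ ($\rho$ a set of names) is the least relation closed under the rules: $\emptyset\vdash 0$; if $\rho_1\vdash P$ and $\rho_2\vdash Q$ then $\rho_1\cup\rho_2\vdash P\mid Q$; if $\rho\vdash P$ and $a\notin\rho$ then $\rho\vdash(\nu a)P$; if $\rho\vdash P$ then $\rho\setminus\{a\}\vdash(a)P$; if $\rho\vdash P$ then $\rho\cup\{a\}\vdash\overline{a}\langle b\rangle.P$; if $\rho\vdash P$ and $x\notin\rho$ then $\rho\cup\{a\}\vdash a(x).P$; if $\rho\vdash P$ and $b\notin\rho$ then $\rho\cup\{a,b\}\vdash\overline{a}\langle\!\langle b\rangle\!\rangle.P$; if $\rho\vdash P$ then $(\rho\setminus\{b\})\cup\{a\}\vdash a\langle\!\langle b\rangle\!\rangle.P$. *)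

From HB Require Import structures.
From mathcomp Require Import all_boot.
From mathcomp Require Import finmap.
Set Implicit Arguments. Unset Strict Implicit. Unset Printing Implicit Defensive.
Local Open Scope fset_scope.

Definition name := nat.

Inductive prefix : Type :=
| POut  : name -> name -> prefix
| PIn   : name -> name -> prefix   (* a(x), x bound in the continuation *)
| PAOut : name -> name -> prefix   (* a<<b>> send authorization *)
| PAIn  : name -> name -> prefix.  (* a<<b>> receive authorization, b not bound *)

Inductive proc : Type :=
| Nil  : proc
| Par  : proc -> proc -> proc
| Res  : name -> proc -> proc      (* (nu a) P, a bound *)
| Auth : name -> proc -> proc      (* (a) P, a not bound *)
| Pre  : prefix -> proc -> proc.

Fixpoint fn (P : proc) : {fset nat} :=
  match P with
  | Nil => fset0
  | Par P Q => fn P `|` fn Q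
  | Res a P => fn P `\ a
  | Auth a P => a |` fn P
  | Pre (POut a b) P => [fset a; b] `|` fn P
  | Pre (PAOut a b) P => [fset a; b] `|` fn P
  | Pre (PAIn a b) P => [fset a; b] `|` fn P
  | Pre (PIn a x) P => a |` (fn P `\ x)
  end.

(* Name swapping (transposition of names a and b), used to express
   alpha-conversion without capture issues. *)
Definition swapn (a b n : name) : name :=
  if n == a then b else if n == b then a else n.

Definition swappre (a b : name) (p : prefix) : prefix :=
  match p with
  | POut c d => POut (swapn a b c) (swapn a b d)
  | PIn c d => PIn (swapn a b c) (swapn a b d)
  | PAOut c d => PAOut (swapn a b c) (swapn a b d)
  | PAIn c d => PAIn (swapn a b c) (swapn a b d)
  end.

Fixpoint swap (a b : name) (P : proc) : proc :=
  match P with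
  | Nil => Nil
  | Par P Q => Par (swap a b P) (swap a b Q)
  | Res c P => Res (swapn a b c) (swap a b P)
  | Auth c P => Auth (swapn a b c) (swap a b P)
  | Pre p P => Pre (swappre a b p) (swap a b P)
  end.

(* Structural congruence: the least congruence containing the listed axioms.
   alpha-convertibility is included via its generating axioms (renaming a
   bound name to a fresh one); closure under congruence yields full
   alpha-conversion. *)
Inductive cong : proc -> proc -> Prop :=
| cong_refl P : cong P P
| cong_sym P Q : cong P Q -> cong Q P
| cong_trans P Q R : cong P Q -> cong Q R -> cong P R
| cong_par P P' Q Q' : cong P P' -> cong Q Q' -> cong (Par P Q) (Par P' Q')
| cong_res a P P' : cong P P' -> cong (Res a P) (Res a P')
| cong_auth a P P' : cong P P' -> cong (Auth a P) (Auth a P')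
| cong_pre p P P' : cong P P' -> cong (Pre p P) (Pre p P')
| cong_par0 P : cong (Par P Nil) P
| cong_parC P Q : cong (Par P Q) (Par Q P)
| cong_parA P Q R : cong (Par (Par P Q) R) (Par P (Par Q R))
| cong_res0 a : cong (Res a Nil) Nil
| cong_resC a b P : cong (Res a (Res b P)) (Res b (Res a P))
| cong_scope a P Q : a \notin fn P -> cong (Par P (Res a Q)) (Res a (Par P Q))
| cong_alpha_res a b P : b \notin fn P -> cong (Res a P) (Res b (swap a b P))
| cong_alpha_in a x y P : y \notin fn P ->
    cong (Pre (PIn a x) P) (Pre (PIn a y) (swap x y P))
| cong_authC a b P : cong (Auth a (Auth b P)) (Auth b (Auth a P))
| cong_auth0 a : cong (Auth a Nil) Nil
| cong_authpar a P Q : cong (Auth a (Par P Q)) (Par (Auth a P) (Auth a Q))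
| cong_authres a b P : a != b -> cong (Auth a (Res b P)) (Res b (Auth a P)).

Inductive typed : {fset nat} -> proc -> Prop :=
| t_nil : typed fset0 Nil
| t_par r1 r2 P Q : typed r1 P -> typed r2 Q -> typed (r1 `|` r2) (Par P Q)
| t_res r a P : typed r P -> a \notin r -> typed r (Res a P)
| t_auth r a P : typed r P -> typed (r `\ a) (Auth a P)
| t_out r a b P : typed r P -> typed (r `|` [fset a]) (Pre (POut a b) P)
| t_in r a x P : typed r P -> x \notin r -> typed (r `|` [fset a]) (Pre (PIn a x) P)
| t_aout r a b P : typed r P -> b \notin r ->
    typed (r `|` [fset a; b]) (Pre (PAOut a b) P)
| t_ain r a b P : typed r P -> typed ((r `\ b) `|` [fset a]) (Pre (PAIn a b) P).

(* Typing is preserved by each axiom of structural congruence and by each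
   congruence rule, read in both directions.  The only delicate axioms are the
   two alpha-conversions.  They follow from two facts: typing is equivariant
   under name transpositions, and a typing environment only contains free
   names, so the fresh name introduced by the renaming is not in the
   environment and the transposition leaves the environment unchanged. *)
From Pilot Require Import Defs.
From mathcomp Require Import all_boot finmap.
Set Implicit Arguments. Unset Strict Implicit.
Local Open Scope fset_scope.
Set Warnings "-notation-overridden,-notation-incompatible-prefix".

Lemma swapnK a b : involutive (swapn a b).
Proof.
move=> n; rewrite /swapn; case: (eqVneq n a) => [->|na].
  by rewrite eqxx; case: (eqVneq b a) => [->|]; rewrite ?eqxx.
case: (eqVneq n b) => [->|nb]; first by rewrite eqxx.
by rewrite (negPf na) (negPf nb).
Qed.

Lemma swapn_inj a b : injective (swapn a b).
Proof. exact: inv_inj (swapnK a b). Qed.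

Lemma swapn_r a b : swapn a b b = a.
Proof. by rewrite /swapn; case: eqVneq => [->|_]; rewrite ?eqxx. Qed.

Lemma eq_swapn a b m n : (m == swapn a b n) = (swapn a b m == n).
Proof. by rewrite -{1}(swapnK a b m) (inj_eq (@swapn_inj a b)). Qed.

Lemma swapK a b : involutive (swap a b).
Proof.
elim=> //= [P IP Q IQ|c P IP|c P IP|p P IP]; rewrite ?IP ?IQ ?swapnK //.
by case: p => c d /=; rewrite !swapnK.
Qed.

Definition swapset a b (r : {fset name}) : {fset name} :=
  [fset swapn a b x | x in r].

Lemma mem_swapset a b r x : (x \in swapset a b r) = (swapn a b x \in r).
Proof. by rewrite -{1}(swapnK a b x) (mem_imfset _ _ (@swapn_inj a b)). Qed.

Lemma swapset_id a b r : a \notin r -> b \notin r -> swapset a b r = r.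
Proof.
move=> a_r b_r; apply/fsetP => x; rewrite mem_swapset /swapn.
case: (eqVneq x a) => [->|_]; first by rewrite (negPf a_r) (negPf b_r).
by case: (eqVneq x b) => [->|_]; first by rewrite (negPf a_r) (negPf b_r).
Qed.

Lemma typed_fn r P : typed r P -> r `<=` fn P.
Proof.
elim=> {r P} /= [|r1 r2 P Q _ h1 _ h2|r a P _ h a_r|r a P _ h|r a b P _ h
                |r a x P _ h x_r|r a b P _ h b_r|r a b P _ h];
  apply/fsubsetP => z; rewrite ?inE //.
- by case/orP => [/(fsubsetP h1)->|/(fsubsetP h2)->]; rewrite ?orbT.
- move=> z_r; rewrite (fsubsetP h _ z_r) andbT.
  by apply: contraNneq a_r => <-.
- by case/andP => _ /(fsubsetP h)->; rewrite orbT.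
- by case/orP => [/(fsubsetP h)->|->]; rewrite ?orbT.
- case/orP => [z_r|->//]; apply/orP; right; rewrite (fsubsetP h _ z_r) andbT.
  by apply: contraNneq x_r => <-.
- by case/orP => [/(fsubsetP h)->|->]; rewrite ?orbT.
- by case/orP => [/andP[_ /(fsubsetP h)->]|->]; rewrite ?orbT.
Qed.

Lemma typed_notin r P a : typed r P -> a \notin fn P -> a \notin r.
Proof. by move=> /typed_fn/fsubsetP sub_r; apply: contra => /sub_r. Qed.

Lemma typed_swap a b r P : typed r P -> typed (swapset a b r) (swap a b P).
Proof.
have swap_env r' r'' Q : typed r' Q -> r' = r'' -> typed r'' Q by move=> ? <-.
elim=> {r P} /= [|r1 r2 P Q _ h1 _ h2|r c P _ h c_r|r c P _ h|r c d P _ h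
                |r c x P _ h x_r|r c d P _ h d_r|r c d P _ h].
- by apply: swap_env t_nil _; apply/fsetP => z; rewrite mem_swapset !inE.
- by apply: swap_env (t_par h1 h2) _; apply/fsetP => z; rewrite !(mem_swapset, inE).
- by apply: t_res h _; rewrite mem_swapset swapnK.
- apply: swap_env (t_auth _ h) _.
  by apply/fsetP => z; rewrite !(mem_swapset, inE) !eq_swapn.
- apply: swap_env (t_out _ _ h) _.
  by apply/fsetP => z; rewrite !(mem_swapset, inE) !eq_swapn.
- apply: swap_env (t_in _ h _) _; first by rewrite mem_swapset swapnK.
  by apply/fsetP => z; rewrite !(mem_swapset, inE) !eq_swapn.
- apply: swap_env (t_aout _ h _) _; first by rewrite mem_swapset swapnK.
  by apply/fsetP => z; rewrite !(mem_swapset, inE) !eq_swapn.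
- apply: swap_env (t_ain _ _ h) _.
  by apply/fsetP => z; rewrite !(mem_swapset, inE) !eq_swapn.
Qed.

Lemma typed_swap_fresh r a b P :
  typed r P -> a \notin r -> b \notin r -> typed r (swap a b P).
Proof. by move=> h a_r b_r; rewrite -(swapset_id a_r b_r); apply: typed_swap. Qed.

Lemma typed_swap_notin r a b P :
  typed r (swap a b P) -> b \notin fn P -> a \notin r.
Proof.
move=> /(typed_swap a b); rewrite swapK => h /(typed_notin h).
by rewrite mem_swapset swapn_r.
Qed.

Lemma typed_nilE r : typed r Defs.Nil -> r = fset0.
Proof. by move=> h; inversion h. Qed.

Lemma typed_parE r P Q :
  typed r (Par P Q) -> exists r1 r2, [/\ r = r1 `|` r2, typed r1 P & typed r2 Q].
Proof. by move=> h; inversion h; exists r1, r2. Qed.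

Lemma typed_resE r a P : typed r (Res a P) -> typed r P /\ a \notin r.
Proof. by move=> h; inversion h. Qed.

Lemma typed_authE r a P : typed r (Auth a P) -> exists2 r', r = r' `\ a & typed r' P.
Proof. by move=> h; inversion h; exists r0. Qed.

Lemma typed_inE r a x P :
  typed r (Pre (PIn a x) P) -> exists r', [/\ r = r' `|` [fset a], typed r' P & x \notin r'].
Proof. by move=> h; inversion h; exists r0. Qed.

Definition same_typing P Q := forall r, typed r P <-> typed r Q.

Lemma same_typing_par P P' Q Q' :
  same_typing P P' -> same_typing Q Q' -> same_typing (Par P Q) (Par P' Q').
Proof.
by move=> eP eQ r; split=> /typed_parE[r1 [r2 [-> h1 h2]]];
  apply: t_par; [apply/eP | apply/eQ | apply/eP | apply/eQ].
Qed.

Lemma same_typing_res a P P' : same_typing P P' -> same_typing (Res a P) (Res a P').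
Proof. by move=> eP r; split=> /typed_resE[h a_r]; apply: (t_res _ a_r); apply/eP. Qed.

Lemma same_typing_auth a P P' : same_typing P P' -> same_typing (Auth a P) (Auth a P').
Proof. by move=> eP r; split=> /typed_authE[r' -> h]; apply: t_auth; apply/eP. Qed.

Lemma same_typing_pre p P P' : same_typing P P' -> same_typing (Pre p P) (Pre p P').
Proof. by move=> eP r; split=> h; inversion h; constructor => //; apply/eP. Qed.

Lemma same_typing_par0 P : same_typing (Par P Defs.Nil) P.
Proof.
move=> r; split=> [/typed_parE[r1 [r2 [-> h /typed_nilE->]]]|h].
  by rewrite fsetU0.
by rewrite -[r]fsetU0; apply: t_par h t_nil.
Qed.

Lemma same_typing_parC P Q : same_typing (Par P Q) (Par Q P).
Proof. by move=> r; split=> /typed_parE[r1 [r2 [-> h1 h2]]]; rewrite fsetUC; apply: t_par. Qed.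

Lemma same_typing_parA P Q R : same_typing (Par (Par P Q) R) (Par P (Par Q R)).
Proof.
move=> r; split.
  case/typed_parE=> _ [r3 [-> /typed_parE[r1 [r2 [-> h1 h2]]] h3]].
  by rewrite -fsetUA; apply: t_par h1 (t_par h2 h3).
case/typed_parE=> r1 [_ [-> h1 /typed_parE[r2 [r3 [-> h2 h3]]]]].
by rewrite fsetUA; apply: t_par (t_par h1 h2) h3.
Qed.

Lemma same_typing_res0 a : same_typing (Res a Defs.Nil) Defs.Nil.
Proof.
move=> r; split=> [/typed_resE[/typed_nilE-> _]|/typed_nilE->]; first exact: t_nil.
by apply: t_res t_nil _; rewrite inE.
Qed.

Lemma same_typing_resC a b P : same_typing (Res a (Res b P)) (Res b (Res a P)).
Proof.
by move=> r; split=> /typed_resE[/typed_resE[h b_r] a_r]; do 2 apply: t_res => //.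
Qed.

Lemma same_typing_scope a P Q :
  a \notin fn P -> same_typing (Par P (Res a Q)) (Res a (Par P Q)).
Proof.
move=> a_P r; split.
  case/typed_parE=> r1 [r2 [-> h1 /typed_resE[h2 a_r2]]].
  by apply: t_res (t_par h1 h2) _; rewrite inE negb_or a_r2 (typed_notin h1 a_P).
case/typed_resE=> /typed_parE[r1 [r2 [-> h1 h2]]].
by rewrite inE negb_or => /andP[_ a_r2]; apply: t_par h1 (t_res h2 a_r2).
Qed.

Lemma same_typing_alpha_res a b P :
  b \notin fn P -> same_typing (Res a P) (Res b (swap a b P)).
Proof.
move=> b_P r; split=> [/typed_resE[h a_r]|/typed_resE[h b_r]].
  have b_r := typed_notin h b_P.
  by apply: (t_res _ b_r); apply: typed_swap_fresh.
have a_r := typed_swap_notin h b_P.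
by apply: (t_res _ a_r); rewrite -(swapK a b P); apply: typed_swap_fresh.
Qed.

Lemma same_typing_alpha_in a x y P :
  y \notin fn P -> same_typing (Pre (PIn a x) P) (Pre (PIn a y) (swap x y P)).
Proof.
move=> y_P r; split=> /typed_inE[r' [-> h]] => [x_r|y_r].
  have y_r := typed_notin h y_P.
  by apply: (t_in _ _ y_r); apply: typed_swap_fresh.
have x_r := typed_swap_notin h y_P.
by apply: (t_in _ _ x_r); rewrite -(swapK x y P); apply: typed_swap_fresh.
Qed.

Lemma same_typing_authC a b P : same_typing (Auth a (Auth b P)) (Auth b (Auth a P)).
Proof.
move=> r; split=> /typed_authE[_ -> /typed_authE[r' -> h]];
  by rewrite fsetDDl fsetUC -fsetDDl; do 2 apply: t_auth.
Qed.

Lemma same_typing_auth0 a : same_typing (Auth a Defs.Nil) Defs.Nil.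
Proof.
move=> r; split=> [/typed_authE[_ -> /typed_nilE->]|/typed_nilE->].
  by rewrite fset0D; apply: t_nil.
by rewrite -(fset0D [fset a]); apply: t_auth t_nil.
Qed.

Lemma same_typing_authpar a P Q :
  same_typing (Auth a (Par P Q)) (Par (Auth a P) (Auth a Q)).
Proof.
move=> r; split.
  case/typed_authE=> _ -> /typed_parE[r1 [r2 [-> h1 h2]]].
  by rewrite fsetDUl; apply: t_par (t_auth _ h1) (t_auth _ h2).
case/typed_parE=> _ [_ [-> /typed_authE[r1 -> h1] /typed_authE[r2 -> h2]]].
by rewrite -fsetDUl; apply: t_auth (t_par h1 h2).
Qed.

Lemma same_typing_authres a b P :
  a != b -> same_typing (Auth a (Res b P)) (Res b (Auth a P)).
Proof.
move=> ab r; split.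
  case/typed_authE=> r' -> /typed_resE[h b_r].
  by apply: t_res (t_auth _ h) _; rewrite inE negb_and b_r orbT.
case/typed_resE=> /typed_authE[r' -> h].
rewrite !inE negb_and negbK eq_sym (negPf ab) /= => b_r.
by apply: t_auth; apply: t_res h b_r.
Qed.

Lemma cong_same_typing P Q : cong P Q -> same_typing P Q.
Proof.
elim=> {P Q}.
- by [].
- by move=> P Q _ ePQ r; apply: iff_sym (ePQ r).
- by move=> P Q R _ ePQ _ eQR r; apply: iff_trans (eQR r).
- by move=> *; apply: same_typing_par.
- by move=> *; apply: same_typing_res.
- by move=> *; apply: same_typing_auth.
- by move=> *; apply: same_typing_pre.
- exact: same_typing_par0.
- exact: same_typing_parC.
- exact: same_typing_parA.
- exact: same_typing_res0.
- exact: same_typing_resC.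
- exact: same_typing_scope.
- exact: same_typing_alpha_res.
- exact: same_typing_alpha_in.
- exact: same_typing_authC.
- exact: same_typing_auth0.
- exact: same_typing_authpar.
- exact: same_typing_authres.
Qed.

Theorem mainTheorem4 (rho : {fset nat}) (P Q : proc) :
  typed rho P -> cong P Q -> typed rho Q.
Proof. by move=> h /cong_same_typing/(_ rho) eq_typing; apply/eq_typing. Qed.
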